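(* Let $2\leq k<n$, let $K\subset\mathbb{C}^n$ be a convex body and let $p_0$ be a point in the interior of $K$. If for every complex $k$-dimensional affine subspace $P$ through $p_0$ the section $P\cap K$ is a (complex, $k$-dimensional) ellipsoid in $P$, then $K$ is an ellipsoid.
   Context: A convex body is a compact convex subset of $\mathbb{C}^n$ with nonempty interior. A (complex) ellipsoid in a complex affine space of dimension $m$ is the image of the closed Euclidean unit ball of $\mathbb{C}^m$ under an injective complex affine map into that space. *)

From HB Require Import structures.
From mathcomp Require Import all_boot all_order all_algebra.
From mathcomp Require Import all_classical all_reals all_analysis.
From mathcomp Require Import complex.
Import Order.TTheory GRing.Theory Num.Theory.
Import numFieldNormedType.Exports.

Set Implicit Arguments.
Unset Strict Implicit.
Unset Printing Implicit Defensive.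

Local Open Scope ring_scope.
Local Open Scope classical_set_scope.

(* The complex numbers over R, viewed as a numFieldType so that
   MathComp-Analysis equips it (and 'rV[Cplx R]_n = C^n) with its
   usual (Euclidean / product) topology. *)
Definition Cplx (R : realType) : numFieldType := R[i].

Definition convex_set (R : realType) (n : nat) (K : set 'rV[Cplx R]_n) : Prop :=
  forall x y, K x -> K y -> forall t : R, 0 <= t <= 1 ->
    K (((t%:C)%C : Cplx R) *: x + (((1 - t)%:C)%C : Cplx R) *: y).

Definition convex_body (R : realType) (n : nat) (K : set 'rV[Cplx R]_n) : Prop :=
  [/\ convex_set K, compact K & interior K !=set0].

Definition unit_ball (R : realType) (m : nat) : set 'rV[Cplx R]_m :=
  [set w | \sum_(i < m) `|w ord0 i| ^+ 2 <= 1].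

(* The complex affine subspace p0 + (row space of A); when A is row_free
   (rank k) this is a complex affine subspace of dimension k through p0,
   and every such subspace arises this way. *)
Definition affine_span (R : realType) (k n : nat)
    (p0 : 'rV[Cplx R]_n) (A : 'M[Cplx R]_(k, n)) : set 'rV[Cplx R]_n :=
  [set p0 + u *m A | u in [set: 'rV[Cplx R]_k]].

(* E is an m-dimensional complex ellipsoid in the (affine) space P:
   the image of the closed unit ball of C^m under an injective complex
   affine map C^m -> P, w |-> c + w *m B (B row_free = injective). *)
Definition ellipsoid_in (R : realType) (m n : nat)
    (P : set 'rV[Cplx R]_n) (E : set 'rV[Cplx R]_n) : Prop :=
  exists (c : 'rV[Cplx R]_n) (B : 'M[Cplx R]_(m, n)),
    [/\ row_free B, (forall w, P (c + w *m B)) &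
        E = [set c + w *m B | w in @unit_ball R m]].

From HB Require Import structures.
From mathcomp Require Import all_boot all_order all_algebra.
From mathcomp Require Import all_classical all_reals all_analysis.
From mathcomp Require Import complex.
From mathcomp Require Import ring lra.
Import Order.TTheory GRing.Theory Num.Theory.
Import numFieldNormedType.Exports.

Set Implicit Arguments.
Unset Strict Implicit.
Unset Printing Implicit Defensive.

Local Open Scope ring_scope.
Local Open Scope classical_set_scope.

(* Along each real line p0 + R x the body K is a segment
   {t | a(x) t^2 + 2 b(x) t <= 1} with a(x) > 0, and these coefficients are unique.
   Any two directions lie in a complex k-plane through p0, whose section is an
   ellipsoid; there a is a positive Hermitian quadratic form and b a real linear
   form.  Hence a is homogeneous and satisfies the parallelogram law, so by
   polarization it is h(x, x) for a positive definite Hermitian form h = x H y^*,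
   and b is real linear.  Factoring H = M M^* with the spectral theorem turns
   a(x) + 2 b(x) <= 1 into the equation of the image of a ball under an affine
   bijection. *)

Section RealEuclideanStructure.
Variable R : realType.
Implicit Types (x y : Cplx R) (t : R).
Local Notation Re := (@complex.Re R).
Local Notation Im := (@complex.Im R).

Lemma complex_ext x y : Re x = Re y -> Im x = Im y -> x = y.
Proof. by case: x => ? ?; case: y => ? ? /= -> ->. Qed.

Lemma ReD x y : Re (x + y) = Re x + Re y. Proof. by case: x; case: y. Qed.
Lemma ImD x y : Im (x + y) = Im x + Im y. Proof. by case: x; case: y. Qed.
Lemma ReN x : Re (- x) = - Re x. Proof. by case: x. Qed.
Lemma ImN x : Im (- x) = - Im x. Proof. by case: x. Qed.
Lemma Re_realM t x : Re (t%:C%C * x) = t * Re x. Proof. by case: x => ? ? /=; ring. Qed.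
Lemma Im_realM t x : Im (t%:C%C * x) = t * Im x. Proof. by case: x => ? ? /=; ring. Qed.
Lemma Re_iM x : Re ('i%C * x) = - Im x. Proof. by case: x => ? ? /=; ring. Qed.
Lemma Im_iM x : Im ('i%C * x) = Re x. Proof. by case: x => ? ? /=; ring. Qed.

Definition sqnorm {m} (u : 'rV[Cplx R]_m) : R :=
  \sum_i (Re (u 0 i) ^+ 2 + Im (u 0 i) ^+ 2).
Definition rdot {m} (u v : 'rV[Cplx R]_m) : R :=
  \sum_i (Re (u 0 i) * Re (v 0 i) + Im (u 0 i) * Im (v 0 i)).

Section Rows.
Variable m : nat.
Implicit Types u v w : 'rV[Cplx R]_m.

Lemma sqnormD u v : sqnorm (u + v) = sqnorm u + 2 * rdot u v + sqnorm v.
Proof.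
rewrite /sqnorm /rdot mulr_sumr -!big_split; apply: eq_bigr => i _ /=.
by rewrite mxE ReD ImD; ring.
Qed.

Lemma sqnormN u : sqnorm (- u) = sqnorm u.
Proof. by apply: eq_bigr => i _; rewrite mxE ReN ImN !sqrrN. Qed.

Lemma sqnormZ t u : sqnorm (t%:C%C *: u) = t ^+ 2 * sqnorm u.
Proof.
rewrite /sqnorm mulr_sumr; apply: eq_bigr => i _.
by rewrite mxE Re_realM Im_realM; ring.
Qed.

Lemma sqnorm_iZ u : sqnorm ('i%C *: u) = sqnorm u.
Proof. by apply: eq_bigr => i _; rewrite mxE Re_iM Im_iM; ring. Qed.

Lemma rdotC u v : rdot u v = rdot v u.
Proof. by apply: eq_bigr => i _; rewrite mulrC [X in _ + X]mulrC. Qed.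

Lemma rdotDl u v w : rdot (u + v) w = rdot u w + rdot v w.
Proof.
rewrite /rdot -big_split; apply: eq_bigr => i _ /=.
by rewrite mxE ReD ImD; ring.
Qed.

Lemma rdotZl t u v : rdot (t%:C%C *: u) v = t * rdot u v.
Proof.
rewrite /rdot mulr_sumr; apply: eq_bigr => i _.
by rewrite mxE Re_realM Im_realM; ring.
Qed.

Lemma rdotZr t u v : rdot u (t%:C%C *: v) = t * rdot u v.
Proof. by rewrite rdotC rdotZl rdotC. Qed.

Lemma rdotNl u v : rdot (- u) v = - rdot u v.
Proof.
rewrite /rdot -sumrN; apply: eq_bigr => i _.
by rewrite mxE ReN ImN; ring.
Qed.

Lemma rdotNr u v : rdot u (- v) = - rdot u v.
Proof. by rewrite rdotC rdotNl rdotC. Qed.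

Lemma rdotxx u : rdot u u = sqnorm u.
Proof. by apply: eq_bigr => i _; rewrite !expr2. Qed.

Lemma rdot0l v : rdot 0 v = 0.
Proof. by rewrite -(scale0r (0 : 'rV_m)) -[0 : Cplx R]/(0 : R)%:C%C rdotZl mul0r. Qed.

Lemma sqnorm0 : sqnorm (0 : 'rV[Cplx R]_m) = 0.
Proof. by rewrite -rdotxx rdot0l. Qed.

Lemma sqnorm_ge0 u : 0 <= sqnorm u.
Proof. by apply: sumr_ge0 => i _; rewrite addr_ge0 // sqr_ge0. Qed.

Lemma sqnorm_eq0 u : (sqnorm u == 0) = (u == 0).
Proof.
apply/idP/eqP => [|->]; last by rewrite sqnorm0.
rewrite psumr_eq0 => [/allP u0|i _]; last by rewrite addr_ge0 ?sqr_ge0.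
apply/rowP => i; have /implyP := u0 i (mem_index_enum i).
rewrite paddr_eq0 ?sqr_ge0 // !sqrf_eq0 mxE => /(_ isT) /andP[/eqP ? /eqP ?].
exact: complex_ext.
Qed.

Lemma sqnorm_gt0 u : (0 < sqnorm u) = (u != 0).
Proof. by rewrite lt_def sqnorm_eq0 sqnorm_ge0 andbT. Qed.

Lemma unit_ballE u : unit_ball u <-> sqnorm u <= 1.
Proof.
rewrite /unit_ball /=.
have -> : \sum_(i < m) `|u 0 i| ^+ 2 = (sqnorm u)%:C%C.
  by rewrite /sqnorm rmorph_sum; apply: eq_bigr => i _; rewrite -add_Re2_Im2.
by rewrite -[1]/(1 : R)%:C%C lecR.
Qed.

End Rows.
End RealEuclideanStructure.

Section QuadraticInterval.
Variable R : rcfType.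
Implicit Types a b t : R.

Definition qroot_hi a b : R := (- b + Num.sqrt (b ^+ 2 + a)) / a.
Definition qroot_lo a b : R := (- b - Num.sqrt (b ^+ 2 + a)) / a.

Section Roots.
Variables (a b : R).
Hypothesis a_gt0 : 0 < a.

Let sqrt_sqr : Num.sqrt (b ^+ 2 + a) ^+ 2 = b ^+ 2 + a.
Proof. by rewrite sqr_sqrtr // addr_ge0 ?sqr_ge0 ?ltW. Qed.

Let norm_lt_sqrt : `|b| < Num.sqrt (b ^+ 2 + a).
Proof.
by rewrite -sqrtr_sqr ltr_sqrt ?ltrDl // ltr_wpDl ?sqr_ge0.
Qed.

Lemma qroot_hi_gt0 : 0 < qroot_hi a b.
Proof.
rewrite /qroot_hi divr_gt0 // addrC subr_gt0.
exact: le_lt_trans (ler_norm b) norm_lt_sqrt.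
Qed.

Lemma qroot_lo_lt0 : qroot_lo a b < 0.
Proof.
rewrite /qroot_lo pmulr_llt0 ?invr_gt0 // subr_lt0.
by rewrite (le_lt_trans (ler_norm _)) ?normrN.
Qed.

Lemma qroot_mul : qroot_hi a b * qroot_lo a b = - a^-1.
Proof.
have a0 : a != 0 by rewrite gt_eqF.
rewrite /qroot_hi /qroot_lo mulrACA -invfM.
have -> : (- b + Num.sqrt (b ^+ 2 + a)) * (- b - Num.sqrt (b ^+ 2 + a)) = - a.
  by rewrite mulrC -subr_sqr sqrrN sqrt_sqr; ring.
by field.
Qed.

Lemma qroot_add : qroot_hi a b + qroot_lo a b = - (2 * b / a).
Proof. by rewrite /qroot_hi /qroot_lo -mulrDl; ring. Qed.

Lemma qfactor t :
  a * t ^+ 2 + 2 * b * t - 1 = a * (t - qroot_hi a b) * (t - qroot_lo a b).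
Proof.
have a0 : a != 0 by rewrite gt_eqF.
have -> : a * (t - qroot_hi a b) * (t - qroot_lo a b) =
  a * (t ^+ 2 - (qroot_hi a b + qroot_lo a b) * t + qroot_hi a b * qroot_lo a b).
  by ring.
by rewrite qroot_add qroot_mul; field.
Qed.

Lemma quad_le1P t :
  (a * t ^+ 2 + 2 * b * t <= 1) = (qroot_lo a b <= t <= qroot_hi a b).
Proof.
rewrite -subr_le0 qfactor -mulrA pmulr_rle0 //.
have := qroot_lo_lt0; have := qroot_hi_gt0.
by move=> *; apply/idP/andP => [?|[? ?]]; first split; nra.
Qed.

End Roots.

Lemma eq_segment_bounds (l1 u1 l2 u2 : R) : l1 <= u1 ->
  (forall t, (l1 <= t <= u1) = (l2 <= t <= u2)) -> l1 = l2 /\ u1 = u2.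
Proof.
move=> l1u1 E.
have /andP[l2l1 l1u2] : l2 <= l1 <= u2 by rewrite -E lexx l1u1.
have /andP[l2u1 u1u2] : l2 <= u1 <= u2 by rewrite -E lexx l1u1.
have /andP[l1l2 _] : l1 <= l2 <= u1 by rewrite E lexx (le_trans l2l1).
have /andP[_ u2u1] : l1 <= u2 <= u1 by rewrite E lexx (le_trans l2l1).
by split; apply: le_anti; rewrite ?l1l2 ?l2l1 ?u1u2 ?u2u1.
Qed.

Lemma quad_le1_coef_uniq a1 b1 a2 b2 : 0 < a1 -> 0 < a2 ->
  (forall t, (a1 * t ^+ 2 + 2 * b1 * t <= 1) = (a2 * t ^+ 2 + 2 * b2 * t <= 1)) ->
  a1 = a2 /\ b1 = b2.
Proof.
move=> a1_gt0 a2_gt0 E.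
have [lo_eq hi_eq] : qroot_lo a1 b1 = qroot_lo a2 b2 /\ qroot_hi a1 b1 = qroot_hi a2 b2.
  apply: eq_segment_bounds => [|t]; last by rewrite -!quad_le1P.
  exact/ltW/(lt_trans (qroot_lo_lt0 b1 a1_gt0) (qroot_hi_gt0 b1 a1_gt0)).
have a_eq : a1 = a2.
  apply/invr_inj/oppr_inj.
  by rewrite -(qroot_mul b1 a1_gt0) -(qroot_mul b2 a2_gt0) lo_eq hi_eq.
split=> //; move: (qroot_add a1 b1); rewrite lo_eq hi_eq qroot_add a_eq.
have a2_neq0 : a2 != 0 by rewrite gt_eqF.
by move/oppr_inj/(mulIf (invr_neq0 a2_neq0)) => ?; lra.
Qed.

Lemma quad_le1_unbounded a b : 0 < a -> exists t, 1 < a * t ^+ 2 + 2 * b * t.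
Proof.
move=> a_gt0; exists (qroot_hi a b + 1).
by rewrite ltNge quad_le1P // negb_and -!ltNge ltrDl ltr01 orbT.
Qed.

End QuadraticInterval.

Lemma nat_ivt (f : nat -> nat) (r N : nat) :
  (f 0 <= r)%N -> (r <= f N)%N -> (forall j, f j.+1 <= (f j).+1)%N ->
  exists j, f j = r.
Proof.
move=> f0 fN fS; elim: N fN => [|N IH] fN.
  by exists 0%N; apply/eqP; rewrite eqn_leq f0.
have [rfN|fNr] := leqP r (f N); first exact: IH.
by exists N.+1; apply/eqP; rewrite eqn_leq fN andbT (leq_trans (fS N)).
Qed.

Section RowFreeSupmx.
Variable F : fieldType.

Lemma row_free_supmx m n r (X : 'M[F]_(m, n)) : (\rank X <= r <= n)%N ->
  exists2 A : 'M[F]_(r, n), row_free A & (X <= A)%MS.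
Proof.
case: n X => [|n] X /andP[Xr rn].
  move: rn; rewrite leqn0 => /eqP r0; subst r.
  exists 0; last by rewrite (thinmx0 X) sub0mx.
  by rewrite /row_free mxrank0.
pose S j := (\sum_(0 <= i < j) <<(delta_mx 0 (inord i) : 'rV[F]_n.+1)>>)%MS.
pose f j := \rank (X + S j)%MS.
have fn : (n.+1 <= f n.+1)%N.
  rewrite -[X in (X <= _)%N](mxrank1 F) mxrankS //.
  apply/row_subP => i; rewrite row1 (submx_trans _ (addsmxSr _ _)) //.
  rewrite -[i in delta_mx 0 i]inord_val /S big_mkord.
  by apply: (sumsmx_sup (Ordinal (ltn_ord i))) => //; rewrite genmxE.
have [j <-] : exists j, f j = r.
  apply: (@nat_ivt f r n.+1 _ (leq_trans rn fn)).
    by rewrite /f /S big_geq // addsmx0.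
  move=> i; rewrite /f /S big_nat_recr //= addsmxA.
  apply: leq_trans (mxrank_adds_leqif _ _) _.
  by rewrite genmxE -[X in (_ <= X)%N]addn1 leq_add2l rank_leq_row.
exists (row_base (X + S j)%MS); first exact: row_base_free.
by rewrite eq_row_base addsmxSl.
Qed.

Lemma rows_in_row_free_mx k n (x y : 'rV[F]_n) : (2 <= k <= n)%N ->
  exists A : 'M[F]_(k, n), [/\ row_free A, exists u, x = u *m A & exists v, y = v *m A].
Proof.
case/andP=> k2 kn.
have [|A Afree sXA] := @row_free_supmx _ _ k (col_mx x y).
  by rewrite kn andbT (leq_trans (rank_leq_row _)).
move: sXA; rewrite col_mx_sub => /andP[/submxP[u ->] /submxP[v ->]].
by exists A; split; [|exists u|exists v].
Qed.

End RowFreeSupmx.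

Local Open Scope sesquilinear_scope.

Section HermitianForms.
Variables (C : numClosedFieldType) (n : nat).
Local Notation V := 'rV[C]_n.

Lemma sesquilinear_form_mx (h : V -> V -> C) :
  (forall x x' y, h (x + x') y = h x y + h x' y) ->
  (forall z x y, h (z *: x) y = z * h x y) ->
  (forall x y, h y x = (h x y)^*) ->
  exists2 H : 'M[C]_n, H^t* = H & forall x y, h x y = (x *m H *m y^t*) 0 0.
Proof.
move=> hD hZ hC.
have hDr x y y' : h x (y + y') = h x y + h x y'.
  by rewrite !(hC _ x) hD rmorphD.
have hZr z x y : h x (z *: y) = z^* * h x y by rewrite !(hC _ x) hZ rmorphM.
have h0 y : h 0 y = 0 by apply/(addrI (h 0 y)); rewrite -hD !addr0.
have h0r x : h x 0 = 0 by rewrite hC h0 conjC0.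
pose H : 'M[C]_n := \matrix_(i, j) h (delta_mx 0 i) (delta_mx 0 j).
exists H => [|x y]; first by apply/matrixP => i j; rewrite !mxE -hC.
rewrite {1}(row_sum_delta x) {1}(row_sum_delta y).
rewrite (big_morph (h^~ _) (fun u v => hD u v _) (h0 _)).
transitivity (\sum_i \sum_j x 0 i * ((y 0 j)^* * H i j)).
  apply: eq_bigr => i _; rewrite hZ (big_morph (h _) (hDr _) (h0r _)) mulr_sumr.
  by apply: eq_bigr => j _; rewrite hZr mxE.
rewrite mxE exchange_big /=; apply: eq_bigr => j _.
rewrite !mxE mulr_suml; apply: eq_bigr => i _.
by rewrite !mxE [_^* * _]mulrC mulrA.
Qed.

Lemma posdef_factor (H : 'M[C]_n) : H^t* = H ->
  (forall x : V, x != 0 -> 0 < (x *m H *m x^t*) 0 0) ->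
  exists2 M : 'M[C]_n, M \in unitmx & H = M *m M^t*.
Proof.
move=> H_herm H_pos.
pose P := spectralmx H; pose D := spectral_diag H.
have P_unitary : P \is unitarymx := spectral_unitarymx H.
have PP : P *m P^t* = 1%:M by apply/unitarymxP.
have HD : H = P^t* *m diag_mx D *m P.
  rewrite -invmx_unitary //; apply/orthomx_spectralP/normalmxP.
  by rewrite H_herm.
have D_gt0 l : 0 < D 0 l.
  have e_neq0 : (delta_mx 0 l : V) *m P != 0.
    apply/negP => /eqP /(congr1 (fun M => M *m P^t* )).
    rewrite -mulmxA PP mulmx1 mul0mx => /matrixP/(_ 0 l)/eqP.
    by rewrite !mxE !eqxx oner_eq0.
  have := H_pos _ e_neq0; congr (0 < _).
  rewrite HD !mulmxA -[_ *m P *m P^t*]mulmxA PP mulmx1.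
  rewrite trmx_mul map_mxM !mulmxA -[_ *m P *m P^t*]mulmxA PP mulmx1.
  rewrite mul_mx_diag mxE (bigD1 l) //= big1 => [|l' l'l]; rewrite !mxE ?eqxx.
    by rewrite conjC1 mulr1 mul1r addr0.
  by rewrite (negbTE l'l) !mul0r.
pose s : V := \row_l sqrtC (D 0 l).
exists (P^t* *m diag_mx s).
  rewrite unitmx_mul unitarymx_unit ?trmxC_unitary //=.
  rewrite unitmxE det_diag unitfE; apply/prodf_neq0 => l _.
  by rewrite mxE sqrtC_eq0 gt_eqF.
rewrite HD trmx_mul map_mxM trmxCK tr_diag_mx map_diag_mx mulmxA.
rewrite -[in RHS](mulmxA (P^t*)) mulmx_diag; congr (_ *m diag_mx _ *m _).
apply/rowP => l; rewrite !mxE [X in _ * X]conj_Creal -?expr2 ?sqrtCK //.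
by rewrite ger0_real // sqrtC_ge0 ltW.
Qed.

End HermitianForms.

Section QuadraticsOnCn.
Variables (R : realType) (n : nat).
Local Notation V := 'rV[Cplx R]_n.

Lemma sqnormE m (u : 'rV[Cplx R]_m) : (sqnorm u)%:C%C = (u *m u^t*) 0 0.
Proof.
rewrite /sqnorm rmorph_sum mxE; apply: eq_bigr => i _.
by rewrite !mxE; case: (u 0 i) => a b; apply: complex_ext => /=; ring.
Qed.

Lemma real_linear_rdot (f : V -> R) :
  (forall x y, f (x + y) = f x + f y) -> (forall (t : R) x, f (t%:C%C *: x) = t * f x) ->
  exists m : V, forall x, f x = rdot x m.
Proof.
move=> fD fZ; have f0 : f 0 = 0 by have := fZ 0 0; rewrite scaler0 mul0r.
exists (\row_j (f (delta_mx 0 j) +i* f ('i%C *: delta_mx 0 j))%C) => x.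
rewrite {1}(row_sum_delta x) (big_morph f fD f0); apply: eq_bigr => j _.
rewrite {1}[x 0 j]complexE [_ * _%:C%C]mulrC scalerDl -scalerA fD !fZ.
by rewrite !mxE.
Qed.

Lemma quadratic_ellipsoid (K : set V) (p0 m : V) (M : 'M[Cplx R]_n) : M \in unitmx ->
  (forall x, K (p0 + x) <-> sqnorm (x *m M) + 2 * rdot (x *m M) m <= 1) ->
  ellipsoid_in n [set: V] K.
Proof.
move=> M_unit KM.
pose r := Num.sqrt (1 + sqnorm m).
have m1_gt0 : 0 < 1 + sqnorm m by rewrite (lt_le_trans ltr01) // lerDl sqnorm_ge0.
have r_gt0 : 0 < r by rewrite sqrtr_gt0.
have r2 : r ^+ 2 = 1 + sqnorm m by rewrite sqr_sqrtr // ltW.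
have r_neq0 : r%:C%C != 0 :> Cplx R by rewrite gt_eqF // ltcR.
pose c := p0 - m *m invmx M; pose B := r%:C%C *: invmx M.
have B_unit : B \in unitmx by rewrite unitmxZ ?unitfE // unitmx_inv.
have KB w : K (c + w *m B) <-> sqnorm w <= 1.
  have -> : c + w *m B = p0 + (r%:C%C *: w - m) *m invmx M.
    by rewrite /c /B -scalemxAr mulmxBl -scalemxAl addrAC -addrA.
  rewrite KM mulmxKV // sqnormD sqnormZ sqnormN rdotNr rdotDl rdotZl rdotNl.
  rewrite rdotxx r2; split=> ?; nra.
exists c, B; split=> //; first by rewrite row_free_unit.
apply/seteqP; split=> [q Kq|_ [w w_ball <-]]; last exact/KB/unit_ballE.
exists ((q - c) *m invmx B); last by rewrite mulmxKV // addrC subrK.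
by apply/unit_ballE/KB; rewrite mulmxKV // addrC subrK.
Qed.

End QuadraticsOnCn.

Lemma interior_ray (R : realType) n (K : set 'rV[Cplx R]_n) (q v : 'rV[Cplx R]_n) :
  interior K q -> exists2 e : R, 0 < e & K (q + e%:C%C *: v).
Proof.
case/nbhs_normP => e /= e_gt0 K_ball.
have N_gt0 : 0 < `|v| + 1 by rewrite ltr_wpDl.
have eN_gt0 : 0 < e / (`|v| + 1) by rewrite divr_gt0.
exists (complex.Re (e / (`|v| + 1))); first by move: eN_gt0; rewrite ltcE => /andP[].
have -> : (complex.Re (e / (`|v| + 1)))%:C%C = e / (`|v| + 1).
  by move: eN_gt0; case: (e / _) => ? ?; rewrite ltcE /= => /andP[/eqP -> _].
apply: K_ball => /=.
rewrite opprD addrA subrr sub0r normrN normrZ gtr0_norm //.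
by rewrite mulrAC ltr_pdivrMr // mulrDr mulr1 ltrDl.
Qed.

Section EllipsoidalSections.
Variable R : realType.
Variables (n k : nat) (K : set 'rV[Cplx R]_n) (p0 : 'rV[Cplx R]_n).
Variable A : 'M[Cplx R]_(k, n).

Lemma ellipsoid_section_ball :
  ellipsoid_in k (affine_span p0 A) (affine_span p0 A `&` K) ->
  exists (S : 'M[Cplx R]_k) (u0 : 'rV[Cplx R]_k),
    S \in unitmx /\ forall u, K (p0 + u *m A) <-> sqnorm ((u - u0) *m S) <= 1.
Proof.
case=> c [B [B_free B_in KE]].
have [u0 _ c_eq] : affine_span p0 A c by move: (B_in 0); rewrite mul0mx addr0.
have /choice[f f_eq] i : exists u, p0 + u *m A = c + delta_mx 0 i *m B.
  by have [u _ ?] := B_in (delta_mx 0 i); exists u.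
pose T : 'M[Cplx R]_k := \matrix_i (f i - u0).
have BT : B = T *m A.
  apply/row_matrixP => i; rewrite row_mul rowK mulmxBl rowE.
  apply: (addrI c); rewrite -f_eq -c_eq.
  by rewrite -addrA; congr (p0 + _); rewrite addrC subrK.
have T_unit : T \in unitmx.
  rewrite -row_free_unit /row_free eqn_leq rank_leq_row.
  by have := mxrankM_maxl T A; rewrite -BT (eqP B_free).
have ball_iff w : (affine_span p0 A `&` K) (c + w *m B) <-> unit_ball w.
  rewrite KE; split=> [[w' w'_ball /addrI /(row_free_inj B_free) <-] //|].
  by exists w.
exists (invmx T), u0; split=> [|u]; first by rewrite unitmx_inv.
have -> : p0 + u *m A = c + ((u - u0) *m invmx T) *m B.
  rewrite BT mulmxA mulmxKV // -c_eq mulmxBl.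
  by rewrite -addrA [u0 *m A + _]addrC subrK.
by rewrite -unit_ballE -ball_iff; split=> [Ku|[]//]; split.
Qed.

Lemma section_quadratic : interior K p0 ->
  ellipsoid_in k (affine_span p0 A) (affine_span p0 A `&` K) ->
  exists (S : 'M[Cplx R]_k) (z : 'rV[Cplx R]_k), S \in unitmx /\
    forall u, K (p0 + u *m A) <-> sqnorm (u *m S) + 2 * rdot (u *m S) z <= 1.
Proof.
move=> p0_int /ellipsoid_section_ball[S [u0 [S_unit KS]]].
pose z0 := u0 *m S; pose d := 1 - sqnorm z0.
have KS' u : K (p0 + u *m A) <-> sqnorm (u *m S) - 2 * rdot (u *m S) z0 <= d.
  by rewrite KS mulmxBl sqnormD rdotNr sqnormN /d; split=> ?; lra.
(* p0 is strictly inside the section: follow the ray from p0 away from its centre *)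
have d_gt0 : 0 < d.
  have [e e_gt0] := interior_ray (- (u0 *m A)) p0_int.
  have -> : e%:C%C *: - (u0 *m A) = ((- e)%:C%C *: u0) *m A.
    by rewrite -scalemxAl rmorphN scaleNr scalerN.
  rewrite KS' -scalemxAl sqnormZ rdotZl rdotxx /d.
  by have := sqnorm_ge0 z0; move=> *; nra.
pose c := (Num.sqrt d)^-1.
have c2 : c ^+ 2 = d^-1 by rewrite exprVn sqr_sqrtr ?ltW.
have c_neq0 : c%:C%C != 0 :> Cplx R.
  by rewrite gt_eqF // ltcR invr_gt0 sqrtr_gt0.
exists (c%:C%C *: S), ((- c)%:C%C *: z0); split=> [|u].
  by rewrite unitmxZ ?unitfE.
rewrite KS' -scalemxAr sqnormZ rdotZl rdotZr.
have -> : c ^+ 2 * sqnorm (u *m S) + 2 * (c * (- c * rdot (u *m S) z0)) =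
    (sqnorm (u *m S) - 2 * rdot (u *m S) z0) * c ^+ 2 by ring.
by rewrite c2 ler_pdivrMr // mul1r.
Qed.

End EllipsoidalSections.

Definition line_coef_spec (R : realType) n (K : set 'rV[Cplx R]_n) (p0 x : 'rV[Cplx R]_n) :
    set (R * R) :=
  [set ab | 0 < ab.1 /\
    forall t : R, K (p0 + t%:C%C *: x) <-> ab.1 * t ^+ 2 + 2 * ab.2 * t <= 1].

(* (0, 0) is a junk value, taken in particular at x = 0.  The lock keeps ring,
   field and lra from unfolding the choice operator when comparing atoms. *)
HB.lock Definition line_coef (R : realType) n (K : set 'rV[Cplx R]_n) (p0 x : 'rV[Cplx R]_n) :
  R * R := xget (0, 0) (line_coef_spec K p0 x).

Definition acoef (R : realType) n (K : set 'rV[Cplx R]_n) (p0 x : 'rV[Cplx R]_n) : R :=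
  (line_coef K p0 x).1.
Definition bcoef (R : realType) n (K : set 'rV[Cplx R]_n) (p0 x : 'rV[Cplx R]_n) : R :=
  (line_coef K p0 x).2.

Section LineCoefficients.
Variables (R : realType) (n : nat) (K : set 'rV[Cplx R]_n) (p0 : 'rV[Cplx R]_n).
Local Notation line_coef := (line_coef K p0).
Local Notation line_coef_spec := (line_coef_spec K p0).
Local Notation acoef := (acoef K p0).
Local Notation bcoef := (bcoef K p0).

Lemma line_coefE x a b : line_coef_spec x (a, b) -> line_coef x = (a, b).
Proof.
move=> ab_spec; rewrite line_coef.unlock.
case: xgetP => [[a' b'] _ /= [a'_gt0 Ka']|/(_ _ ab_spec)//].
case: ab_spec => /= a_gt0 Ka.
have [-> ->] // : a' = a /\ b' = b.
by apply: quad_le1_coef_uniq => // t; apply/idP/idP => ?; [apply/Ka/Ka' | apply/Ka'/Ka].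
Qed.

Lemma line_coef0 : K p0 -> line_coef 0 = (0, 0).
Proof.
move=> Kp0; rewrite line_coef.unlock; case: xgetP => // -[a b] _ [/= a_gt0 Kab].
have [t] := quad_le1_unbounded b a_gt0.
rewrite ltNge => /negP t_out; exfalso; apply: t_out.
by apply/Kab; rewrite scaler0 addr0.
Qed.

Lemma plane_coef k (A : 'M[Cplx R]_(k, n)) : interior K p0 ->
  ellipsoid_in k (affine_span p0 A) (affine_span p0 A `&` K) ->
  exists (S : 'M[Cplx R]_k) (z : 'rV[Cplx R]_k),
    [/\ S \in unitmx, forall w, acoef (w *m A) = sqnorm (w *m S),
        forall w, bcoef (w *m A) = rdot (w *m S) z &
        forall w, K (p0 + w *m A) <-> acoef (w *m A) + 2 * bcoef (w *m A) <= 1].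
Proof.
move=> p0_int /(section_quadratic p0_int)[S [z [S_unit KS]]].
have coefE w : line_coef (w *m A) = (sqnorm (w *m S), rdot (w *m S) z).
  have [->|w_neq0] := eqVneq w 0.
    by rewrite !mul0mx (line_coef0 (nbhs_singleton p0_int)) sqnorm0 rdot0l.
  apply: line_coefE; split=> [|t] /=.
    rewrite sqnorm_gt0; apply: contra w_neq0 => /eqP wS0.
    by rewrite -(mulmxK S_unit w) wS0 mul0mx.
  rewrite scalemxAl KS -scalemxAl sqnormZ rdotZl.
  by rewrite [sqnorm _ * _]mulrC -mulrA [rdot _ _ * t]mulrC.
by exists S, z; split=> // w; rewrite /acoef /bcoef coefE.
Qed.

End LineCoefficients.

Section QuadraticStructure.
Variables (R : realType) (n k : nat) (K : set 'rV[Cplx R]_n) (p0 : 'rV[Cplx R]_n).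
Hypotheses (k_ge2 : (2 <= k)%N) (k_lt_n : (k < n)%N) (p0_int : interior K p0).
Hypothesis K_sections : forall A : 'M[Cplx R]_(k, n), row_free A ->
  ellipsoid_in k (affine_span p0 A) (affine_span p0 A `&` K).
Local Notation V := 'rV[Cplx R]_n.
Local Notation a := (acoef K p0).
Local Notation b := (bcoef K p0).

Let k_le_n : (2 <= k <= n)%N. Proof. by rewrite k_ge2 ltnW. Qed.

Lemma pair_coef (x y : V) :
  exists (A : 'M[Cplx R]_(k, n)) (S : 'M[Cplx R]_k) (z u v : 'rV[Cplx R]_k),
  [/\ S \in unitmx, x = u *m A, y = v *m A,
      forall w, a (w *m A) = sqnorm (w *m S) & forall w, b (w *m A) = rdot (w *m S) z].
Proof.
have [A [A_free [u ->] [v ->]]] := rows_in_row_free_mx x y k_le_n.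
have [S [z [S_unit aS bS _]]] := plane_coef p0_int (K_sections A_free).
by exists A, S, z, u, v.
Qed.

Lemma K_quadratic x : K (p0 + x) <-> a x + 2 * b x <= 1.
Proof.
have [A [A_free [u ->] _]] := rows_in_row_free_mx x x k_le_n.
by have [S [z [_ _ _ ->]]] := plane_coef p0_int (K_sections A_free).
Qed.

Lemma acoefZ (t : R) x : a (t%:C%C *: x) = t ^+ 2 * a x.
Proof.
have [A [S [z [u [v [_ -> _ aS _]]]]]] := pair_coef x x.
by rewrite scalemxAl !aS -scalemxAl sqnormZ.
Qed.

Lemma acoef_iZ x : a ('i%C *: x) = a x.
Proof.
have [A [S [z [u [v [_ -> _ aS _]]]]]] := pair_coef x x.
by rewrite scalemxAl !aS -scalemxAl sqnorm_iZ.
Qed.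

Lemma acoefN x : a (- x) = a x.
Proof.
have [A [S [z [u [v [_ -> _ aS _]]]]]] := pair_coef x x.
by rewrite -mulNmx !aS mulNmx sqnormN.
Qed.

Lemma acoef0 : a 0 = 0.
Proof. by rewrite -(scale0r 0) -[0 : Cplx R]/(0 : R)%:C%C acoefZ expr0n mul0r. Qed.

Lemma acoef_gt0 x : x != 0 -> 0 < a x.
Proof.
have [A [S [z [u [v [S_unit -> _ aS _]]]]]] := pair_coef x x.
move=> uA_neq0; rewrite aS sqnorm_gt0; apply: contra uA_neq0 => /eqP uS0.
by rewrite -(mulmxK S_unit u) uS0 !mul0mx.
Qed.

Lemma acoef_parallelogram x y : a (x + y) + a (x - y) = 2 * a x + 2 * a y.
Proof.
have [A [S [z [u [v [_ -> -> aS _]]]]]] := pair_coef x y.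
rewrite -mulmxDl -mulmxBl !aS mulmxDl mulmxBl !sqnormD sqnormN rdotNr; ring.
Qed.

Lemma bcoefD x y : b (x + y) = b x + b y.
Proof.
have [A [S [z [u [v [_ -> -> _ bS]]]]]] := pair_coef x y.
by rewrite -mulmxDl !bS mulmxDl rdotDl.
Qed.

Lemma bcoefZ (t : R) x : b (t%:C%C *: x) = t * b x.
Proof.
have [A [S [z [u [v [_ -> _ _ bS]]]]]] := pair_coef x x.
by rewrite scalemxAl !bS -scalemxAl rdotZl.
Qed.

Definition apolar x y := (a (x + y) - a (x - y)) / 4.

Lemma apolar_plane x y :
  exists (A : 'M[Cplx R]_(k, n)) (S : 'M[Cplx R]_k) (u v : 'rV[Cplx R]_k),
  [/\ x = u *m A, y = v *m A &
      forall w w', apolar (w *m A) (w' *m A) = rdot (w *m S) (w' *m S)].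
Proof.
have [A [S [z [u [v [_ -> -> aS _]]]]]] := pair_coef x y.
exists A, S, u, v; split=> // w w'.
rewrite /apolar -mulmxDl -mulmxBl !aS mulmxDl mulmxBl !sqnormD sqnormN rdotNr.
by field.
Qed.

Lemma apolarZl (t : R) x y : apolar (t%:C%C *: x) y = t * apolar x y.
Proof.
have [A [S [u [v [-> -> aS]]]]] := apolar_plane x y.
by rewrite scalemxAl !aS -scalemxAl rdotZl.
Qed.

Lemma apolarC x y : apolar x y = apolar y x.
Proof. by rewrite /apolar [x + y]addrC -[y - x]opprB acoefN. Qed.

Lemma apolar_iZ x y : apolar ('i%C *: x) ('i%C *: y) = apolar x y.
Proof. by rewrite /apolar -scalerDr -scalerBr !acoef_iZ. Qed.

Lemma apolarxx x : apolar x x = a x.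
Proof.
rewrite /apolar [x - x]subrr acoef0 subr0.
have -> : x + x = (2 : R)%:C%C *: x by rewrite rmorph_nat scaler_nat mulr2n.
by rewrite acoefZ; field.
Qed.

Lemma apolarNl x y : apolar (- x) y = - apolar x y.
Proof.
by rewrite -scaleN1r -[-1 : Cplx R](rmorphN1 (real_complex R)) apolarZl mulN1r.
Qed.

Lemma apolar0l y : apolar 0 y = 0.
Proof. by rewrite /apolar add0r sub0r acoefN subrr mul0r. Qed.

(* Jordan-von Neumann: the parallelogram law makes the polar form additive *)
Lemma apolarDl x x' y : apolar (x + x') y = apolar x y + apolar x' y.
Proof.
have mid u u' w : apolar u w + apolar u' w = apolar (u + u') (w + w) / 2.
  have := acoef_parallelogram (u + w) (u' + w).
  have := acoef_parallelogram (u - w) (u' - w).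
  have -> : u + w + (u' + w) = u + u' + (w + w) by rewrite addrACA.
  have -> : u - w + (u' - w) = u + u' - (w + w) by rewrite addrACA opprD.
  have -> : u + w - (u' + w) = u - u' by rewrite opprD addrACA subrr addr0.
  have -> : u - w - (u' - w) = u - u' by rewrite opprB addrA subrK.
  by rewrite /apolar => *; lra.
have apolar2r u : apolar u (y + y) = 2 * apolar u y.
  by have := mid u 0 y; rewrite apolar0l !addr0 => ->; field.
by rewrite mid apolar2r; field.
Qed.

Lemma apolar_iZl x y : apolar ('i%C *: x) y = - apolar x ('i%C *: y).
Proof. by rewrite -apolar_iZ scalerA -expr2 sqr_i scaleN1r apolarNl. Qed.

Lemma apolar_xiZ x : apolar x ('i%C *: x) = 0.
Proof. by have := apolar_iZl x x; rewrite apolarC => ?; lra. Qed.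

Definition hform x y : Cplx R := (apolar x y +i* apolar x ('i%C *: y))%C.

Lemma hformD x x' y : hform (x + x') y = hform x y + hform x' y.
Proof. by apply: complex_ext; rewrite ?ReD ?ImD /= apolarDl. Qed.

Lemma hform_realZ (t : R) x y : hform (t%:C%C *: x) y = t%:C%C * hform x y.
Proof. by apply: complex_ext; rewrite ?Re_realM ?Im_realM /= apolarZl. Qed.

Lemma hform_iZ x y : hform ('i%C *: x) y = 'i%C * hform x y.
Proof. by apply: complex_ext; rewrite ?Re_iM ?Im_iM /= ?apolar_iZ ?apolar_iZl. Qed.

Lemma hformZ z x y : hform (z *: x) y = z * hform x y.
Proof.
have -> : z *: x = (complex.Re z)%:C%C *: x + (complex.Im z)%:C%C *: ('i%C *: x).
  by rewrite scalerA -scalerDl [_ * 'i%C]mulrC -complexE.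
by rewrite hformD !hform_realZ hform_iZ mulrA [_ * 'i%C]mulrC -mulrDl -complexE.
Qed.

Lemma hformC x y : hform y x = (hform x y)^*.
Proof. by apply: complex_ext => /=; rewrite apolarC // apolar_iZl. Qed.

Lemma hformxx x : hform x x = (a x)%:C%C.
Proof. by apply: complex_ext; rewrite /= ?apolarxx ?apolar_xiZ. Qed.

Lemma quadratic_rep : exists (M : 'M[Cplx R]_n) (m : V), M \in unitmx /\
  forall x, K (p0 + x) <-> sqnorm (x *m M) + 2 * rdot (x *m M) m <= 1.
Proof.
have [H H_herm hH] := sesquilinear_form_mx hformD hformZ hformC.
have [M M_unit HM] : exists2 M, M \in unitmx & H = M *m M^t*.
  by apply: posdef_factor => // x x_neq0; rewrite -hH hformxx ltcR acoef_gt0.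
have aM x : a x = sqnorm (x *m M).
  apply: (@complexI R).
  by rewrite -hformxx hH HM sqnormE trmx_mul map_mxM !mulmxA.
have [m bM] : exists m, forall y, b (y *m invmx M) = rdot y m.
  apply: real_linear_rdot => [y y'|t y]; first by rewrite mulmxDl bcoefD.
  by rewrite -scalemxAl bcoefZ.
exists M, m; split=> // x.
by rewrite K_quadratic aM -[x in b x](mulmxK M_unit) bM.
Qed.

End QuadraticStructure.

Theorem theorem4p1 (R : realType) (k n : nat) (hk : (2 <= k)%N) (hkn : (k < n)%N)
    (K : set 'rV[Cplx R]_n) (p0 : 'rV[Cplx R]_n) :
  convex_body K ->
  interior K p0 ->
  (forall A : 'M[Cplx R]_(k, n), row_free A ->
     ellipsoid_in k (affine_span p0 A) (affine_span p0 A `&` K)) ->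
  ellipsoid_in n [set: 'rV[Cplx R]_n] K.
Proof.
move=> _ p0_int K_sections.
have [M [m [M_unit KM]]] := quadratic_rep hk hkn p0_int K_sections.
exact: quadratic_ellipsoid M_unit KM.
Qed.
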